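(* Let $R$ be a commutative ring and $r\ge2$. Let $b^+=(b_1,\ldots,b_r)^t\in R^r$ be a unimodular column and let $b^-=(b_{-r},\ldots,b_{-1})^t\in R^r$ be a column such that $\sum_{i=1}^rb_ib_{-i}=0$. Then there exists $M\in\Theta(r,R)$ such that $b^-=Mb^+$.
   Context: A column is unimodular if its entries generate the unit ideal. For an $r\times r$ matrix $g$ with rows and columns indexed $1,\ldots,r$, its antidiagonal transpose $g^{\tau}$ has entries $(g^\tau)_{i,j}=g_{r+1-j,r+1-i}$. $\Theta(r,R)$ is the set of $r\times r$ matrices $M$ over $R$ with $M^{\tau}=-M$ and all antidiagonal entries $M_{i,r+1-i}$ equal to zero. Note the entries of $b^-$ are listed in the order $b_{-r},\ldots,b_{-1}$. *)

From mathcomp Require Import all_boot all_order all_algebra.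
Set Implicit Arguments. Unset Strict Implicit. Unset Printing Implicit Defensive.
Import GRing.Theory.
Local Open Scope ring_scope.

(* Indices are 0-based: paper index k in 1..r corresponds to ordinal k-1;
   paper index r+1-k corresponds to rev_ord. *)

Definition unimodular (R : comRingType) (r : nat) (b : 'cV[R]_r) : Prop :=
  exists c : 'rV[R]_r, \sum_(i < r) c 0 i * b i 0 = 1.

(* antidiagonal transpose: (g^tau)_{i,j} = g_{r+1-j, r+1-i} *)
Definition adtr (R : Type) (r : nat) (g : 'M[R]_r) : 'M[R]_r :=
  \matrix_(i, j) g (rev_ord j) (rev_ord i).

Definition Theta (R : comRingType) (r : nat) (M : 'M[R]_r) : Prop :=
  adtr M = - M /\ forall i : 'I_r, M i (rev_ord i) = 0.

From mathcomp Require Import all_boot all_order all_algebra.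
Import GRing.Theory.
Local Open Scope ring_scope.

(* Pick a row c with c b^+ = 1 and put A := b^- c, so that A b^+ = b^-.
   Every matrix of the form A - A^tau lies in Theta, and A^tau is the outer
   product of the reversals of c and b^-, so A^tau b^+ is a multiple of
   sum_i b_i b_{-i} = 0.  Hence M := A - A^tau works (for every r). *)

Lemma adtrK (R : Type) (r : nat) : involutive (@adtr R r).
Proof. by move=> A; apply/matrixP => i j; rewrite !mxE !rev_ordK. Qed.

Lemma adtrB (R : zmodType) (r : nat) (A B : 'M[R]_r) :
  adtr (A - B) = adtr A - adtr B.
Proof. by apply/matrixP => i j; rewrite !mxE. Qed.

Lemma Theta_subr_adtr (R : comRingType) (r : nat) (A : 'M[R]_r) :
  Theta (A - adtr A).
Proof.
split; first by rewrite adtrB adtrK opprB.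
by move=> i; rewrite !mxE rev_ordK subrr.
Qed.

Lemma adtr_mul_col_row (R : comRingType) (r : nat) (x : 'cV[R]_r) (y : 'rV[R]_r) :
  adtr (x *m y) = \col_i y 0 (rev_ord i) *m \row_j x (rev_ord j) 0.
Proof.
by apply/matrixP => i j; rewrite !mxE !big_ord1 !mxE mulrC.
Qed.

Lemma unimodular_mulmx (R : comRingType) (r : nat) (b : 'cV[R]_r) :
  unimodular b -> exists c : 'rV[R]_r, c *m b = 1.
Proof.
move=> [c cb1]; exists c; apply/matrixP => i j.
by rewrite !ord1 !mxE cb1.
Qed.

(* bp i = b_{i+1} and bm (rev_ord i) = b_{-(i+1)}. *)
Theorem lemma9 (R : comRingType) (r : nat) (hr : (2 <= r)%N)
  (bp bm : 'cV[R]_r) :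
  unimodular bp ->
  \sum_(i < r) bp i 0 * bm (rev_ord i) 0 = 0 ->
  exists M : 'M[R]_r, Theta M /\ bm = M *m bp.
Proof.
move=> /unimodular_mulmx[c cbp1] pairing0.
have rev_bm_bp0 : \row_j bm (rev_ord j) 0 *m bp = 0.
  apply/matrixP => i k; rewrite !ord1 !mxE -[RHS]pairing0.
  by apply: eq_bigr => j _; rewrite mxE mulrC.
exists (bm *m c - adtr (bm *m c)); split; first exact: Theta_subr_adtr.
rewrite mulmxBl adtr_mul_col_row -!mulmxA cbp1 rev_bm_bp0.
by rewrite mulmx1 mulmx0 subr0.
Qed.
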